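(* For every positive integer $n\notin\{1,2,3,6\}$, $A'(n,6,4)=A(n,6,4)$. Moreover, $A'(n,6,4)=1$ for $n\in\{1,2,3\}$ and $A'(6,6,4)=2$.
   Context: For ${\sf u},{\sf v}\in\mathbb{F}_2^n$, $\Delta({\sf u},{\sf v})$ is the Hamming distance and ${\rm wt}({\sf u})$ the Hamming weight. $A'(n,d,e)$ denotes the maximum size of a nonempty set $S\subseteq \mathbb{F}_2^n$ such that ${\rm wt}({\sf u})\le e$ for all ${\sf u}\in S$ and $\Delta({\sf u},{\sf v})\ge d$ for all distinct ${\sf u},{\sf v}\in S$. $A(n,d,e)$ denotes the maximum size of a set $S\subseteq\mathbb{F}_2^n$ all of whose elements have weight exactly $e$ and with pairwise distances at least $d$ (the maximum size of a constant-weight code). It is known that, writing $L(n)=\left\lfloor \frac{n}{4} \left\lfloor \frac{n-1}{3}\right\rfloor \right\rfloor$: $A(n,6,4)=L(n)-1$ if $n\equiv 7,10 \pmod{12}$ and $n\notin\{10,19\}$; $A(n,6,4)=L(n)-1$ if $n\in\{9,17\}$; $A(n,6,4)=L(n)-2$ if $n\in\{8,10,11\}$; $A(19,6,4)=L(19)-3$; and $A(n,6,4)=L(n)$ otherwise. *)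

From mathcomp Require Import all_boot all_order.
Set Implicit Arguments. Unset Strict Implicit. Unset Printing Implicit Defensive.

Definition word (n : nat) := {ffun 'I_n -> bool}.

Definition wt (n : nat) (u : word n) : nat := #|[set i : 'I_n | u i]|.
Definition hdist (n : nat) (u v : word n) : nat := #|[set i : 'I_n | u i != v i]|.

Definition min_dist_ge (n d : nat) (S : {set word n}) : bool :=
  [forall u in S, forall v in S, (u != v) ==> (d <= hdist u v)].

Definition admissible' (n d e : nat) (S : {set word n}) : bool :=
  [&& S != set0, [forall u in S, wt u <= e] & min_dist_ge d S].

Definition admissible (n d e : nat) (S : {set word n}) : bool :=
  [forall u in S, wt u == e] && min_dist_ge d S.

Definition A' (n d e : nat) : nat := \max_(S : {set word n} | admissible' d e S) #|S|.
Definition A (n d e : nat) : nat := \max_(S : {set word n} | admissible d e S) #|S|.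

From mathcomp Require Import all_boot all_order zify.
Set Implicit Arguments. Unset Strict Implicit. Unset Printing Implicit Defensive.

(* Passing to supports, a code of words of weight at most 4 and minimum distance 6 is a
   family of sets of size at most 4 whose pairwise symmetric differences have at least 6
   elements.  Then two 4-sets meet in at most one point, a member of size 3 is disjoint from
   all other members, and a member of size 2 forces all others to be 4-sets avoiding it.
   With at least 7 points, a member of size 2 or 3 can always be completed to a 4-set,
   possibly after moving a few points between other members: add a point lying in no small
   member, or rotate points around three disjoint triples; add two points lying in no common
   member, or, if every pair outside the 2-set is covered, exchange points between the 2-set
   and three 4-sets.  Iterating yields a constant-weight code of the same size.  For n < 6
   two such words cannot coexist, and for n = 6 three cannot. *)

Section Codes.
Variable T : finType.
Implicit Types (A B X Y : {set T}) (F G : {set {set T}}).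

Lemma exists_card_set k : k <= #|T| -> exists A : {set T}, #|A| = k.
Proof.
move=> hk; exists [set:: take k (enum T)].
by rewrite cardsE (card_uniqP (take_uniq _ (enum_uniq T))) size_takel // -cardE.
Qed.

Lemma exists_notin A : #|A| < #|T| -> exists c, c \notin A.
Proof.
move=> sA; have /card_gt0P[c] : 0 < #|~: A| by have := cardsC A; lia.
by rewrite inE; exists c.
Qed.

Lemma exists_other A y : 1 < #|A| -> exists2 a, a \in A & a != y.
Proof.
move=> sA; have /card_gt0P[a] : 0 < #|A :\ y| by move: (cardsD1 y A); case: (y \in A); lia.
by rewrite !inE => /andP[ay aA]; exists a.
Qed.

Lemma cardsU1I_le (c : T) A B : #|(c |: A) :&: B| <= (c \in B) + #|A :&: B|.
Proof.
case: (boolP (c \in B)) => cB; last first.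
  suff -> : (c |: A) :&: B = A :&: B by rewrite leq_addl.
  by apply/setP => e; rewrite !inE; case: eqP => // ->; rewrite (negbTE cB) !andbF.
apply: (@leq_trans #|c |: (A :&: B)|); last by rewrite cardsU1 leq_add2r leq_b1.
by apply/subset_leq_card/subsetP => e; rewrite !inE; case: eqP => //= _ /andP[-> ->].
Qed.

Lemma cardsU1D1 (c x : T) A : c \notin A -> x \in A -> #|c |: (A :\ x)| = #|A|.
Proof. by move=> cA xA; rewrite cardsU1 !inE (negbTE cA) andbF [RHS](cardsD1 x A) xA. Qed.

(* [far A B] means that A and B have a symmetric difference of size at least 6. *)
Definition far A B := 6 + 2 * #|A :&: B| <= #|A| + #|B|.

Lemma far_sym : symmetric far.
Proof. by move=> A B; rewrite /far setIC [#|A| + _]addnC. Qed.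

Lemma far_irr : irreflexive far.
Proof. by move=> A; apply/negbTE; rewrite /far setIid -ltnNge; lia. Qed.

Lemma far_cardsU A B : far A B -> 6 + #|A :&: B| <= #|A :|: B|.
Proof. by rewrite /far => hAB; have := cardsUI A B; lia. Qed.

Lemma far_card A B : far A B -> 6 <= #|T|.
Proof. by move/far_cardsU; have := max_card (A :|: B); lia. Qed.

Lemma far3_cardsU A B C : far A B -> far A C -> far B C -> 9 <= #|A :|: B :|: C|.
Proof.
rewrite /far => fAB fAC fBC.
have := cardsUI A B; have := cardsUI (A :|: B) C.
have : #|(A :|: B) :&: C| <= #|A :&: C| + #|B :&: C|.
  by rewrite setIUl; have := cardsUI (A :&: C) (B :&: C); lia.
lia.
Qed.

Lemma far_setU1_disjoint a b A B :
  #|A| = 3 -> #|B| = 3 -> a \notin A -> b \notin B -> b \notin A -> [disjoint A & B] ->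
  far (a |: A) (b |: B).
Proof.
move=> sA sB aA bB bA /disjoint_setI0 AB0.
have := cardsU1I_le a A (b |: B); rewrite [A :&: _]setIC.
have := cardsU1I_le b B A; rewrite [B :&: A]setIC AB0 cards0 (negbTE bA).
by rewrite /far !cardsU1 aA bB sA sB; case: (a \in _); lia.
Qed.

Lemma far4 A B : #|A| = 4 -> #|B| = 4 -> #|A :&: B| <= 1 -> far A B.
Proof. by rewrite /far => -> ->; lia. Qed.

Definition code64 F :=
  {in F, forall A, #|A| <= 4} /\ {in F &, forall A B, A != B -> far A B}.

Definition deficit F := #|[set A in F | #|A| < 4]|.

Definition improvable F :=
  exists G, [/\ code64 G, #|G| = #|F| & deficit G < deficit F].

Section Improvement.
Variable F : {set {set T}}.
Hypothesis F_le4 : {in F, forall A, #|A| <= 4}.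
Hypothesis F_far : {in F &, forall A B, A != B -> far A B}.

Lemma small_disjoint A B : A \in F -> B \in F -> A != B -> #|A| < 4 -> [disjoint A & B].
Proof.
move=> hA hB nAB sA; rewrite -setI_eq0 -cards_eq0.
by have := F_far hA hB nAB; have := F_le4 hB; rewrite /far; lia.
Qed.

Lemma member_card_gt1 A : 1 < #|F| -> A \in F -> 1 < #|A|.
Proof.
move=> /card_gt1P [B [C [hB hC nBC]]] hA.
have [D [hD nAD]] : exists D, D \in F /\ A != D.
  by case: (eqVneq A B) => [eAB|]; [exists C; rewrite eAB | exists B].
by have := F_far hA hD nAD; have := F_le4 hD; rewrite /far; lia.
Qed.

Lemma improvable_replace (r s : seq {set T}) :
  {subset r <= F} -> uniq r -> has (fun A => #|A| < 4) r -> size s = size r ->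
  all (fun X => #|X| == 4) s -> pairwise far s ->
  {in s & F, forall X B, B \notin r -> far X B} -> improvable F.
Proof.
move=> rF uniq_r /hasP [A0 rA0 sA0] size_sr /allP s4 far_s far_sF.
have far_in_s : {in s &, forall X Y, X != Y -> far X Y}.
  have : pairwise (fun X Y => (X != Y) ==> far X Y) s.
    by apply: sub_pairwise far_s => X Y ->; rewrite implybT.
  rewrite pairwise_all2rel => [/allrelP h X Y sX sY|X|X Y]; first exact/implyP/h.
    by rewrite eqxx.
  by rewrite eq_sym far_sym.
pose R := F :\: [set:: r].
have far_sR : {in s & R, forall X B, far X B}.
  by move=> X B sX; rewrite !inE => /andP[rB hB]; apply: far_sF.
exists ([set:: s] :|: R); split.
- split=> [A|A B]; rewrite !inE.
    by case/orP=> [/s4/eqP -> //|/andP[_ /F_le4]].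
  case/orP=> [sA|RA] /orP[sB|RB]; first exact: far_in_s.
  + by move=> _; apply: far_sR; rewrite ?inE.
  + by move=> _; rewrite far_sym; apply: far_sR; rewrite ?inE.
  + by apply: F_far; [case/andP: RA | case/andP: RB].
- have disj : [disjoint [set:: s] & R].
    apply/pred0P => X /=; apply/negbTE/andP => -[sX RX]; rewrite inE in sX.
    by have := far_sR X X sX RX; rewrite far_irr.
  rewrite cardsU (disjoint_setI0 disj) cards0 subn0 cardsD.
  have /setIidPr -> : [set:: r] \subset F by apply/subsetP => A; rewrite inE => /rF.
  rewrite !cardsE (card_uniqP (pairwise_uniq far_irr far_s)) (card_uniqP uniq_r).
  rewrite size_sr -(card_uniqP uniq_r) subnKC //.
  exact/subset_leq_card/subsetP.
- rewrite /deficit; apply: proper_card; apply/properP; split.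
    by apply/subsetP => A; rewrite !inE => /andP[/orP[/s4/eqP-> //|/andP[_ ->]] ->].
  exists A0; first by rewrite inE rF ?sA0.
  by rewrite !inE rA0 orbF; apply: contraTN sA0 => /andP[/s4/eqP->].
Qed.

Lemma pair_disjoint P B : P \in F -> #|P| = 2 -> B \in F -> B != P ->
  #|B| = 4 /\ [disjoint P & B].
Proof.
move=> hP sP hB nBP; have nPB : P != B by rewrite eq_sym.
split; last by apply: small_disjoint; rewrite ?sP.
by have := F_far hP hB nPB; have := F_le4 hB; rewrite /far sP; lia.
Qed.

Lemma block_meet X Y e e' : X \in F -> Y \in F -> X != Y -> #|X| = 4 -> #|Y| = 4 ->
  e \in X -> e \in Y -> e' \in X -> e' \in Y -> e = e'.
Proof.
move=> hX hY nXY sX sY eX eY e'X e'Y.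
have /card_le1_eqP XY1 : #|X :&: Y| <= 1.
  by have := F_far hX hY nXY; rewrite /far sX sY; lia.
by apply: XY1; rewrite inE ?eX ?eY ?e'X ?e'Y.
Qed.

Lemma far_setU1_triple A B d : A \in F -> B \in F -> A != B -> #|A| = 3 -> d \notin A ->
  (#|B| < 4 -> d \notin B) -> far (d |: A) B.
Proof.
move=> hA hB nAB sA dA dB.
have AB0 : #|A :&: B| = 0.
  by apply/eqP; rewrite cards_eq0 setI_eq0 small_disjoint ?sA.
have := cardsU1I_le d A B; have := F_far hA hB nAB; have := F_le4 hB.
rewrite /far cardsU1 dA sA AB0.
by case: (ltnP #|B| 4) => [/dB/negbTE ->|]; case: (d \in B); lia.
Qed.

Lemma improvable_triple_fresh A c : A \in F -> #|A| = 3 ->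
  {in F, forall B, #|B| < 4 -> c \notin B} -> improvable F.
Proof.
move=> hA sA fresh; have cA : c \notin A by apply: fresh; rewrite ?sA.
apply: (@improvable_replace [:: A] [:: c |: A]) => //=.
- by move=> B; rewrite inE => /eqP ->.
- by rewrite sA.
- by rewrite cardsU1 cA sA.
- move=> X B; rewrite !inE => /eqP -> hB nBA.
  by apply: far_setU1_triple; rewrite // 1?eq_sym //; apply: fresh.
Qed.

(* The triples A1, A2, A3 become A1 + c2, A2 + c3 and A3 + c1. *)
Lemma improvable_triple_cycle A1 A2 A3 c1 c2 c3 :
  {subset [:: A1; A2; A3] <= F} -> uniq [:: A1; A2; A3] ->
  #|A1| = 3 -> #|A2| = 3 -> #|A3| = 3 -> c1 \in A1 -> c2 \in A2 -> c3 \in A3 ->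
  improvable F.
Proof.
move=> sub uniqA s1 s2 s3 h1 h2 h3.
have [hA1 hA2 hA3] : [/\ A1 \in F, A2 \in F & A3 \in F].
  by split; apply: sub; rewrite !inE eqxx ?orbT.
move: (uniqA); rewrite /= !inE negb_or => /and3P[/andP[n12 n13] n23 _].
have disj X Y : X \in F -> Y \in F -> X != Y -> #|X| = 3 -> [disjoint X & Y].
  by move=> hX hY nXY sX; apply: small_disjoint; rewrite ?sX.
have out X Y e : X \in F -> Y \in F -> X != Y -> #|X| = 3 -> e \in X -> e \notin Y.
  by move=> hX hY nXY sX eX; rewrite (disjointFr (disj X Y hX hY nXY sX) eX).
have c1A2 := out _ _ _ hA1 hA2 n12 s1 h1.
have c1A3 := out _ _ _ hA1 hA3 n13 s1 h1.
have c2A1 := out _ _ _ hA2 hA1 (ltac:(by rewrite eq_sym)) s2 h2.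
have c2A3 := out _ _ _ hA2 hA3 n23 s2 h2.
have c3A1 := out _ _ _ hA3 hA1 (ltac:(by rewrite eq_sym)) s3 h3.
have c3A2 := out _ _ _ hA3 hA2 (ltac:(by rewrite eq_sym)) s3 h3.
apply: (@improvable_replace [:: A1; A2; A3] [:: c2 |: A1; c3 |: A2; c1 |: A3]) => //=.
- by rewrite s1.
- by rewrite !cardsU1 c2A1 c3A2 c1A3 s1 s2 s3.
- rewrite [far (c2 |: A1) (c1 |: A3)]far_sym !far_setU1_disjoint //; apply: disj => //.
  by rewrite eq_sym.
- move=> X B; rewrite !inE => /or3P[] /eqP -> hB; rewrite !negb_or => /and3P[nB1 nB2 nB3].
  + by apply: far_setU1_triple; rewrite 1?eq_sym // => _; apply: (out A2); rewrite // eq_sym.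
  + by apply: far_setU1_triple; rewrite 1?eq_sym // => _; apply: (out A3); rewrite // eq_sym.
  + by apply: far_setU1_triple; rewrite 1?eq_sym // => _; apply: (out A1); rewrite // eq_sym.
Qed.

Lemma improvable_pair_uncovered P c d : P \in F -> #|P| = 2 -> c != d ->
  c \notin P -> d \notin P -> {in F, forall B, ~~ ((c \in B) && (d \in B))} -> improvable F.
Proof.
move=> hP sP ncd cP dP uncov.
apply: (@improvable_replace [:: P] [:: c |: (d |: P)]) => //=.
- by move=> B; rewrite inE => /eqP ->.
- by rewrite sP.
- by rewrite !cardsU1 !inE negb_or ncd cP dP sP.
- move=> X B; rewrite !inE => /eqP -> hB nBP.
  have [sB /disjoint_setI0 PB0] := pair_disjoint hP sP hB nBP.
  have := cardsU1I_le c (d |: P) B; have := cardsU1I_le d P B; have := uncov B hB.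
  rewrite /far !cardsU1 !inE negb_or ncd cP dP sP sB PB0 cards0.
  by case: (c \in B); case: (d \in B); lia.
Qed.

(* Proves a goal [e = e'] by case analysis on membership hypotheses in explicit finite sets,
   identifying points with hypotheses [J] saying that two sets meet in at most one point. *)
Ltac meet_bash :=
  repeat match goal with
  | H : is_true (~~ (?u == ?u)) |- _ => case: (negP H (eqxx u))
  | H : is_true ?t, H' : is_true (~~ ?t) |- _ => case: (negP H' H)
  | H : is_true (_ || _) |- _ => case/orP: H => H
  | H : is_true (_ && _) |- _ => case/andP: H => ? ?
  | H : is_true (~~ (_ || _)) |- _ => rewrite negb_or in H
  | H : is_true (_ == _) |- _ => move/eqP: H => H; subst
  | J : forall e e', is_true (e \in ?X) -> is_true (e \in ?Y) ->
          is_true (e' \in ?X) -> is_true (e' \in ?Y) -> e = e',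
    H1 : is_true (?v \in ?X), H2 : is_true (?v \in ?Y),
    H3 : is_true (?w \in ?X), H4 : is_true (?w \in ?Y) |- _ =>
      lazymatch v with w => fail | _ => have := J v w H1 H2 H3 H4 => ?; subst end
  end; done.

(* The 2-set {p1, p2} and blocks B1, B2 meeting at x, B3 through a in B1 and b in B2: p1
   replaces x in B1 and B2, p2 joins x, a, b, and the two other points of B3 go to p1, p2. *)
Section PairSwap.
Variables (p1 p2 x a b : T) (B1 B2 B3 : {set T}).
Hypotheses (hP : [set p1; p2] \in F) (np12 : p1 != p2).
Hypotheses (hB1 : B1 \in F) (hB2 : B2 \in F) (hB3 : B3 \in F).
Hypotheses (nB1 : B1 != [set p1; p2]) (nB2 : B2 != [set p1; p2]) (n12 : B1 != B2).
Hypotheses (xB1 : x \in B1) (xB2 : x \in B2) (aB1 : a \in B1) (bB2 : b \in B2).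
Hypotheses (nax : a != x) (nbx : b != x) (aB3 : a \in B3) (bB3 : b \in B3).

Definition swapP := [set p1; p2] :|: (B3 :\: [set a; b]).
Definition swap1 := p1 |: (B1 :\ x).
Definition swap2 := p1 |: (B2 :\ x).
Definition swap3 := p2 |: (x |: [set a; b]).

Let sP : #|[set p1; p2]| = 2. Proof. by rewrite cards2 np12. Qed.

Lemma swap_block X : X \in F -> X != [set p1; p2] -> [/\ #|X| = 4, p1 \notin X & p2 \notin X].
Proof.
move=> hX nXP; have [sX dPX] := pair_disjoint hP sP hX nXP.
by rewrite sX !(disjointFr dPX) // !inE eqxx ?orbT.
Qed.

Lemma swap_meet X Y : X \in F -> Y \in F ->
  X != [set p1; p2] -> Y != [set p1; p2] -> X != Y ->
  forall e e', e \in X -> e \in Y -> e' \in X -> e' \in Y -> e = e'.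
Proof.
move=> hX hY nXP nYP nXY e e'.
by have [sX _ _] := swap_block hX nXP; have [sY _ _] := swap_block hY nYP; apply: block_meet.
Qed.

Lemma swap_B3 : B3 != [set p1; p2].
Proof.
have [_ p1B1 p2B1] := swap_block hB1 nB1.
by apply: contraTneq aB3 => ->; rewrite !inE negb_or; apply/andP; split;
  apply: contraTneq aB1 => ->.
Qed.

Lemma swap_points : [/\ a \notin B2, b \notin B1, x \notin B3 & a != b].
Proof.
have J12 := swap_meet hB1 hB2 nB1 nB2 n12.
have aB2 : a \notin B2 by apply: contraNN nax => aB2; rewrite (J12 a x).
have bB1 : b \notin B1 by apply: contraNN nbx => bB1; rewrite (J12 b x).
have n13 : B1 != B3 by apply: contraNneq bB1 => ->.
split=> //; last by apply: contraNneq aB2 => ->.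
apply: contraNN nax => xB3.
by rewrite (swap_meet hB1 hB3 nB1 swap_B3 n13 aB1 aB3 xB1 xB3).
Qed.

Lemma card_swapP : #|swapP| = 4.
Proof.
have [_ _ _ nab] := swap_points; have [s3 _ _] := swap_block hB3 swap_B3.
have sub_ab : [set a; b] \subset B3 by apply/subsetP => e; rewrite !inE => /orP[]/eqP->.
have dP3 : [disjoint [set p1; p2] & B3 :\: [set a; b]].
  exact: disjointWr (subsetDl _ _) (pair_disjoint hP sP hB3 swap_B3).2.
by rewrite cardsU (disjoint_setI0 dP3) cards0 subn0 sP cardsDS // s3 cards2 nab.
Qed.

Lemma card_swap1 : #|swap1| = 4.
Proof. by have [s1 p1B1 _] := swap_block hB1 nB1; rewrite cardsU1D1. Qed.

Lemma card_swap2 : #|swap2| = 4.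
Proof. by have [s2 p1B2 _] := swap_block hB2 nB2; rewrite cardsU1D1. Qed.

Lemma card_swap3 : #|swap3| = 4.
Proof.
have [_ _ _ nab] := swap_points.
have [_ _ p2B1] := swap_block hB1 nB1; have [_ _ p2B2] := swap_block hB2 nB2.
have [n2x n2a n2b] : [/\ p2 != x, p2 != a & p2 != b].
  by split; [apply: contraNneq p2B1 => -> | apply: contraNneq p2B1 => -> |
    apply: contraNneq p2B2 => ->].
by rewrite !cardsU1 cards1 !inE !negb_or n2x n2a n2b eq_sym nax eq_sym nbx nab.
Qed.

Lemma far_swap : pairwise far [:: swapP; swap1; swap2; swap3] /\
  {in [:: swapP; swap1; swap2; swap3] & F,
    forall X Y, Y \notin [:: [set p1; p2]; B1; B2; B3] -> far X Y}.
Proof.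
have [aB2 bB1 xB3 nab] := swap_points.
have [_ p1B1 p2B1] := swap_block hB1 nB1.
have [_ p1B2 p2B2] := swap_block hB2 nB2.
have [_ p1B3 p2B3] := swap_block hB3 swap_B3.
have J12 := swap_meet hB1 hB2 nB1 nB2 n12.
have J13 := swap_meet hB1 hB3 nB1 swap_B3 (ltac:(by apply: contraNneq bB1 => ->)).
have J23 := swap_meet hB2 hB3 nB2 swap_B3 (ltac:(by apply: contraNneq aB2 => ->)).
split.
  rewrite /= !andbT; apply/and3P; split; [apply/and3P; split|apply/andP; split|];
    apply: far4; rewrite ?card_swapP ?card_swap1 ?card_swap2 ?card_swap3 //;
    unfold swapP, swap1, swap2, swap3;
    apply/card_le1_eqP => e e'; rewrite !inE => /andP[H1 H2] /andP[H3 H4]; meet_bash.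
move=> X Y; rewrite !inE => /or4P[]/eqP-> hY; rewrite !negb_or => /and4P[nYP nY1 nY2 nY3];
  have [sY p1Y p2Y] := swap_block hY nYP;
  have JY1 := swap_meet hB1 hY nB1 nYP (ltac:(by rewrite eq_sym));
  have JY2 := swap_meet hB2 hY nB2 nYP (ltac:(by rewrite eq_sym));
  have JY3 := swap_meet hB3 hY swap_B3 nYP (ltac:(by rewrite eq_sym));
  apply: far4; rewrite ?card_swapP ?card_swap1 ?card_swap2 ?card_swap3 //;
  unfold swapP, swap1, swap2, swap3;
  apply/card_le1_eqP => e e'; rewrite !inE => /andP[H1 H2] /andP[H3 H4]; meet_bash.
Qed.

Lemma improvable_pair_swap : improvable F.
Proof.
have [aB2 bB1 _ _] := swap_points.
have [far_s far_out] := far_swap.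
apply: (@improvable_replace [:: [set p1; p2]; B1; B2; B3] [:: swapP; swap1; swap2; swap3]).
all: rewrite //=.
- by move=> X; rewrite !inE => /or4P[]/eqP->.
- have n13 : B1 != B3 by apply: contraNneq bB1 => ->.
  have n23 : B2 != B3 by apply: contraNneq aB2 => ->.
  by rewrite !inE !negb_or ![[set p1; p2] == _]eq_sym nB1 nB2 swap_B3 n12 n13 n23.
- by rewrite sP.
- by rewrite card_swapP card_swap1 card_swap2 card_swap3.
Qed.

End PairSwap.

Lemma improvable_pair_covered P : 7 <= #|T| -> P \in F -> #|P| = 2 ->
  (forall c d, c != d -> c \notin P -> d \notin P ->
     exists2 B, B \in F & (c \in B) && (d \in B)) ->
  improvable F.
Proof.
move=> hT hP sP cover.
have [p1 [p2 [np12 eP]]] : exists p1 p2, p1 != p2 /\ P = [set p1; p2].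
  by apply/cards2P; rewrite sP.
have block B e : B \in F -> B != P -> e \in B -> e \notin P.
  by move=> hB nBP eB; rewrite (disjointFl (pair_disjoint hP sP hB nBP).2 eB).
have [x xP] := exists_notin (ltac:(by rewrite sP; lia) : #|P| < #|T|).
have [d] := exists_notin (ltac:(by rewrite cardsU1 sP; lia) : #|x |: P| < #|T|).
rewrite !inE negb_or => /andP[ndx dP].
have [B1 hB1 /andP[xB1 _]] := cover x d (ltac:(by rewrite eq_sym)) xP dP.
have nB1 : B1 != P by apply: contraTneq xB1 => ->.
have s1 : #|B1| = 4 := (pair_disjoint hP sP hB1 nB1).1.
have [z] := exists_notin (ltac:(by rewrite cardsU s1 sP; lia) : #|B1 :|: P| < #|T|).
rewrite !inE negb_or => /andP[zB1 zP].
have [B2 hB2 /andP[xB2 zB2]] := cover x z (ltac:(by apply: contraNneq zB1 => <-)) xP zP.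
have nB2 : B2 != P by apply: contraTneq xB2 => ->.
have s2 : #|B2| = 4 := (pair_disjoint hP sP hB2 nB2).1.
have n12 : B1 != B2 by apply: contraNneq zB1 => ->.
have [a aB1 nax] := exists_other x (ltac:(by rewrite s1) : 1 < #|B1|).
have [b bB2 nbx] := exists_other x (ltac:(by rewrite s2) : 1 < #|B2|).
have nab : a != b.
  apply: contraNneq nax => eab; apply/eqP.
  by apply: (block_meet hB1 hB2 n12 s1 s2) => //; rewrite eab.
have [B3 hB3 /andP[aB3 bB3]] := cover a b nab (block _ _ hB1 nB1 aB1) (block _ _ hB2 nB2 bB2).
rewrite eP in hP nB1 nB2.
exact: (improvable_pair_swap hP np12 hB1 hB2 hB3 nB1 nB2 n12 xB1 xB2 aB1 bB2 nax nbx aB3 bB3).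
Qed.

Lemma improvable_small A0 : 7 <= #|T| -> 1 < #|F| -> A0 \in F -> #|A0| < 4 -> improvable F.
Proof.
move=> hT hF hA0 sA0.
have [s3|s2] : #|A0| = 3 \/ #|A0| = 2 by have := member_card_gt1 hF hA0; lia.
- case: (pickP [pred c | [forall B in F, (#|B| < 4) ==> (c \notin B)]]) => [c|covered].
    move=> /forall_inP fresh; apply: (improvable_triple_fresh hA0 s3) => B hB.
    exact/implyP/fresh.
  have cover c : exists B, [/\ B \in F, #|B| = 3 & c \in B].
    move/negbT: (covered c) => /forall_inPn[B hB]; rewrite negb_imply negbK => /andP[sB cB].
    exists B; split => //; case: (eqVneq B A0) => [-> //|nBA].
    by have := F_far hA0 hB (ltac:(by rewrite eq_sym)); rewrite /far s3; lia.
  have [c cA0] := exists_notin (ltac:(by rewrite s3; lia) : #|A0| < #|T|).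
  have [A2 [hA2 s2 cA2]] := cover c.
  have [c'] : exists c', c' \notin A0 :|: A2.
    by apply: exists_notin; have := cardsU A0 A2; rewrite s3 s2; lia.
  rewrite inE negb_or => /andP[c'A0 c'A2].
  have [A3 [hA3 s3' c'A3]] := cover c'.
  have [c1 c1A0] : exists c1, c1 \in A0 by apply/card_gt0P; rewrite s3.
  apply: (improvable_triple_cycle _ _ s3 s2 s3' c1A0 cA2 c'A3).
    by move=> B; rewrite !inE => /or3P[]/eqP->.
  have n02 : A0 != A2 by apply: contraNneq cA0 => ->.
  have n03 : A0 != A3 by apply: contraNneq c'A0 => ->.
  have n23 : A2 != A3 by apply: contraNneq c'A2 => ->.
  by rewrite /= !inE negb_or n02 n03 n23.
- case: (boolP [exists c, exists d, [&& c != d, c \notin A0, d \notin A0 &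
      [forall B in F, ~~ ((c \in B) && (d \in B))]]]).
    case/existsP => c /existsP[d /and4P[ncd cA dA /forall_inP uncov]].
    exact: (improvable_pair_uncovered hA0 s2 ncd cA dA uncov).
  move=> covered; apply: (improvable_pair_covered hT hA0 s2) => c d ncd cA dA.
  apply/exists_inP; apply: contraNT covered => nB.
  apply/existsP; exists c; apply/existsP; exists d; rewrite ncd cA dA /=.
  by apply/forall_inP => B hB; apply: contra nB => cdB; apply/exists_inP; exists B.
Qed.

End Improvement.

Lemma code64_regular F : 7 <= #|T| -> code64 F -> 1 < #|F| ->
  exists G, [/\ {in G, forall A, #|A| = 4}, code64 G & #|G| = #|F|].
Proof.
move=> hT; have [k] := ubnP (deficit F); elim: k F => // k IH F defF codeF hF.
case: (posnP (deficit F)) => [def0|/card_gt0P[A0]].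
  exists F; split => // A hA; apply/eqP; rewrite eqn_leq codeF.1 //= leqNgt.
  apply/negP => sA; move/eqP: def0; rewrite cards_eq0 => /eqP/setP/(_ A).
  by rewrite !inE hA sA.
rewrite inE => /andP[hA0 sA0].
have [G [codeG cardG defG]] := improvable_small codeF.1 codeF.2 hT hF hA0 sA0.
have [H [H4 codeH cardH]] := IH G (ltac:(lia)) codeG (ltac:(by rewrite cardG)).
by exists H; rewrite cardH cardG.
Qed.

End Codes.

Section Supports.
Variable n : nat.

Definition supp (u : word n) : {set 'I_n} := [set i | u i].
Definition word_of (A : {set 'I_n}) : word n := [ffun i => i \in A].

Lemma word_ofK : cancel word_of supp.
Proof. by move=> A; apply/setP => i; rewrite inE ffunE. Qed.

Lemma suppK : cancel supp word_of.
Proof. by move=> u; apply/ffunP => i; rewrite ffunE inE. Qed.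

Lemma hdist_supp u v : hdist u v + 2 * #|supp u :&: supp v| = wt u + wt v.
Proof.
have -> : hdist u v = #|(supp u :|: supp v) :\: (supp u :&: supp v)|.
  by apply: eq_card => i; rewrite !inE; case: (u i); case: (v i).
have sub_IU : supp u :&: supp v \subset supp u :|: supp v.
  exact: subset_trans (subsetIl _ _) (subsetUl _ _).
by rewrite cardsDS ?(subset_leq_card sub_IU) // mul2n -addnn addnA subnK
  ?(subset_leq_card sub_IU) // cardsUI.
Qed.

Lemma far_supp u v : (6 <= hdist u v) = far (supp u) (supp v).
Proof. by rewrite /far -[#|supp u| + _](hdist_supp u v) leq_add2r. Qed.

Lemma wt_word_of A : wt (word_of A) = #|A|.
Proof. by rewrite -[wt _]/#|supp _| word_ofK. Qed.

Lemma card_supp_imset (S : {set word n}) : #|supp @: S| = #|S|.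
Proof. exact/card_imset/(can_inj suppK). Qed.

Lemma card_word_of_imset (G : {set {set 'I_n}}) : #|word_of @: G| = #|G|.
Proof. exact/card_imset/(can_inj word_ofK). Qed.

Lemma code64_supp (S : {set word n}) :
  [forall u in S, wt u <= 4] -> min_dist_ge 6 S -> code64 (supp @: S).
Proof.
move=> /forall_inP wt4 /forall_inP dist6; split=> [_ /imsetP[u uS ->]|]; first exact: wt4.
move=> _ _ /imsetP[u uS ->] /imsetP[v vS ->] nuv.
rewrite -far_supp; move/forall_inP: (dist6 u uS) => /(_ v vS)/implyP; apply.
by apply: contraNneq nuv => ->.
Qed.

Lemma min_dist_word_of (G : {set {set 'I_n}}) :
  {in G &, forall A B, A != B -> far A B} -> min_dist_ge 6 (word_of @: G).
Proof.
move=> farG; apply/forall_inP => _ /imsetP[A hA ->]; apply/forall_inP => _ /imsetP[B hB ->].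
apply/implyP => nAB; rewrite far_supp !word_ofK; apply: farG => //.
by apply: contraNneq nAB => ->.
Qed.

Lemma admissible'_word_of (G : {set {set 'I_n}}) :
  G != set0 -> code64 G -> admissible' 6 4 (word_of @: G).
Proof.
move=> nG [G4 farG]; apply/and3P; split; last exact: min_dist_word_of.
  by rewrite imset_eq0.
by apply/forall_inP => _ /imsetP[A hA ->]; rewrite wt_word_of G4.
Qed.

Lemma admissible_word_of (G : {set {set 'I_n}}) :
  {in G, forall A : {set 'I_n}, #|A| = 4} -> code64 G -> admissible 6 4 (word_of @: G).
Proof.
move=> G4 [_ farG]; apply/andP; split; last exact: min_dist_word_of.
by apply/forall_inP => _ /imsetP[A hA ->]; rewrite wt_word_of G4.
Qed.

End Supports.

Lemma code64_set1 (T : finType) (A : {set T}) : #|A| <= 4 -> code64 [set A].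
Proof. by move=> sA; split=> [B /set1P -> //|B C /set1P -> /set1P ->]; rewrite eqxx. Qed.

Lemma A_le_A' n d e : A n d e <= A' n d e.
Proof.
apply/bigmax_leqP => S /andP[/forall_inP wtS dS].
have [-> | nS] := eqVneq S set0; first by rewrite cards0.
apply: leq_bigmax_cond; rewrite /admissible' nS dS andbT /=.
by apply/forall_inP => u /wtS/eqP ->.
Qed.

Lemma A_gt0 n : 4 <= n -> 0 < A n 6 4.
Proof.
move=> n4; have [E sE] : exists E : {set 'I_n}, #|E| = 4.
  by apply: exists_card_set; rewrite card_ord.
have E4 : {in [set E], forall A : {set 'I_n}, #|A| = 4} by move=> A /set1P->.
have adm := admissible_word_of E4 (code64_set1 (eq_leq sE)).
by apply: leq_trans (leq_bigmax_cond _ adm); rewrite card_word_of_imset cards1.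
Qed.

Lemma A'_le_A n : 4 <= n -> n != 6 -> A' n 6 4 <= A n 6 4.
Proof.
move=> n4 n6; apply/bigmax_leqP => S /and3P[_ wtS dS].
have codeF := code64_supp wtS dS.
case: (leqP #|S| 1) => [S1|]; first exact: leq_trans S1 (A_gt0 n4).
rewrite -card_supp_imset => S2.
have n7 : 7 <= #|'I_n|.
  have /card_gt1P[A [B [hA hB nAB]]] := S2.
  have := far_card (codeF.2 A B hA hB nAB); rewrite card_ord => n_ge6.
  by rewrite ltn_neqAle eq_sym n6.
have [G [G4 codeG <-]] := code64_regular n7 codeF S2.
by rewrite -card_word_of_imset; apply/leq_bigmax_cond/admissible_word_of.
Qed.

Lemma A'_le1 n : n < 6 -> A' n 6 4 <= 1.
Proof.
move=> n6; apply/bigmax_leqP => S /and3P[_ wtS dS]; rewrite -card_supp_imset leqNgt.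
apply/negP => /card_gt1P[A [B [hA hB nAB]]].
by have := far_card ((code64_supp wtS dS).2 A B hA hB nAB); rewrite card_ord leqNgt n6.
Qed.

Lemma A'_gt0 n : 0 < A' n 6 4.
Proof.
have n0 : [set set0 : {set 'I_n}] != set0 by apply/set0Pn; exists set0; rewrite inE.
have adm := admissible'_word_of n0 (code64_set1 (ltac:(by rewrite cards0) : #|set0| <= 4)).
by apply: leq_trans (leq_bigmax_cond _ adm); rewrite card_word_of_imset cards1.
Qed.

Lemma A'_6 : A' 6 6 4 = 2.
Proof.
apply/eqP; rewrite eqn_leq; apply/andP; split.
  apply/bigmax_leqP => S /and3P[_ wtS dS]; rewrite -card_supp_imset leqNgt.
  apply/negP => /card_gt2P[A [B [C [[hA hB hC] [nAB nBC nCA]]]]].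
  have [_ farF] := code64_supp wtS dS.
  have := far3_cardsU (farF _ _ hA hB nAB) (farF _ _ hA hC (ltac:(by rewrite eq_sym)))
    (farF _ _ hB hC nBC).
  by have := max_card (A :|: B :|: C); rewrite card_ord; lia.
have [E sE] : exists E : {set 'I_6}, #|E| = 3 by apply: exists_card_set; rewrite card_ord.
have sCE : #|~: E| = 3 by have := cardsC E; rewrite sE card_ord; lia.
have far_EC : far E (~: E) by rewrite /far setICr cards0 sE sCE.
have nE : E != ~: E by apply: contraTneq far_EC => <-; rewrite far_irr.
have codeG : code64 [set E; ~: E].
  split=> [A|A B]; first by rewrite !inE => /orP[]/eqP->; rewrite ?sE ?sCE.
  by rewrite !inE => /orP[]/eqP-> /orP[]/eqP->; rewrite ?eqxx // far_sym.
have nG : [set E; ~: E] != set0 by apply/set0Pn; exists E; rewrite !inE eqxx.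
apply: leq_trans (leq_bigmax_cond _ (admissible'_word_of nG codeG)).
by rewrite card_word_of_imset cards2 nE.
Qed.

Theorem corollary3 :
  (forall n : nat, 0 < n -> n \notin [:: 1; 2; 3; 6] -> A' n 6 4 = A n 6 4) /\
  (forall n : nat, n \in [:: 1; 2; 3] -> A' n 6 4 = 1) /\
  A' 6 6 4 = 2.
Proof.
split; [|split; last exact: A'_6].
- move=> n n0; rewrite !inE !negb_or => /and4P[n1 n2 n3 n6].
  have n4 : 4 <= n by case: n n0 n1 n2 n3 n6 => [|[|[|[|n]]]].
  by apply/eqP; rewrite eqn_leq A'_le_A ?A_le_A'.
- move=> n hn; apply/eqP; rewrite eqn_leq A'_gt0 andbT A'_le1 //.
  by move: hn; rewrite !inE => /or3P[]/eqP->.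
Qed.
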